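(* Let $d,\tilde d\in\mathbb{R}^m$ with $d,\tilde d>0$ and $\ell,\tilde\ell\in\mathbb{R}^m$ with $f(d,\ell)>0$ and $f(\tilde d,\tilde\ell)>0$. Let $j\in\{1,\dots,m\}$ and suppose $$\frac{1}{f(\tilde d,\tilde\ell)}\tilde d=\alpha\Big(\frac{1}{f(d,\ell)}d+\frac{2}{m-1}\frac{1}{\gamma_j(d,\ell)^2}e_j\Big)$$ for some scalar $\alpha\ge\frac{m^2-1}{m^2}$. Then $\mathrm{vol}\,E(\tilde d,\tilde\ell)\le e^{-\frac{1}{2(m+1)}}\mathrm{vol}\,E(d,\ell)$.
   Context: Standing assumption: $A=[a_1|\cdots|a_m]\in\mathbb{R}^{n\times m}$ has columns of unit Euclidean norm and $\{A\lambda:\lambda\ge0\}=\mathbb{R}^n$ (so $m>n\ge1$); $u\in\mathbb{R}^m$. $D=\mathrm{diag}(d)$; $r(\ell)=\tfrac12(u+\ell)$, $v(\ell)=\tfrac12(u-\ell)$, $B(d)=ADA^\top$, $y(d,\ell)=B(d)^{-1}ADr(\ell)$, $t(d,\ell)=A^\top y(d,\ell)-r(\ell)$, $f(d,\ell)=v(\ell)^\top Dv(\ell)-t(d,\ell)^\top Dt(d,\ell)$, $\gamma_i(d,\ell)=\sqrt{f(d,\ell)a_i^\top B(d)^{-1}a_i}$. $E(d,\ell)=\{x:(A^\top x-\ell)^\top D(A^\top x-u)\le0\}$, and its (relative) volume is defined as $\mathrm{vol}\,E(d,\ell):=f(d,\ell)^{n/2}/\sqrt{\det(ADA^\top)}$.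 *)

From HB Require Import structures.
From Stdlib Require Import Reals Lra ClassicalEpsilon FunctionalExtensionality.
From mathcomp Require Import all_boot all_order all_algebra.

Set Implicit Arguments.
Unset Strict Implicit.
Unset Printing Implicit Defensive.

Definition Req_bool (x y : R) : bool := if Req_EM_T x y then true else false.

Lemma Req_boolP : Equality.axiom Req_bool.
Proof. move=> x y; rewrite /Req_bool; case: Req_EM_T => h; by constructor. Qed.

HB.instance Definition _ := hasDecEq.Build R Req_boolP.

Definition R_find (P : pred R) (n : nat) : option R :=
  match excluded_middle_informative (exists x, P x) with
  | left h => Some (proj1_sig (constructive_indefinite_description _ h))
  | right _ => None
  end.

Lemma R_find_correct P n x : R_find P n = Some x -> P x.
Proof.
rewrite /R_find; case: excluded_middle_informative => // h [<-].
exact: proj2_sig (constructive_indefinite_description _ h).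
Qed.

Lemma R_find_complete (P : pred R) : (exists x, P x) -> exists n, R_find P n.
Proof. move=> h; exists 0%N; rewrite /R_find; by case: excluded_middle_informative. Qed.

Lemma R_find_ext (P Q : pred R) : P =1 Q -> R_find P =1 R_find Q.
Proof. move=> h n; have -> : P = Q by apply: functional_extensionality. by []. Qed.

HB.instance Definition _ :=
  hasChoice.Build R R_find_correct R_find_complete R_find_ext.

Lemma R_addA : forall x y z : R, Rplus x (Rplus y z) = Rplus (Rplus x y) z. Proof. move=> *; lra. Qed.
Lemma R_addC : forall x y : R, Rplus x y = Rplus y x. Proof. move=> *; lra. Qed.
Lemma R_add0 : forall x : R, Rplus R0 x = x. Proof. move=> *; lra. Qed.
Lemma R_addN : forall x : R, Rplus (Ropp x) x = R0. Proof. move=> *; lra. Qed.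

HB.instance Definition _ := GRing.isZmodule.Build R R_addA R_addC R_add0 R_addN.

Lemma R_mulA : forall x y z : R, Rmult x (Rmult y z) = Rmult (Rmult x y) z. Proof. move=> *; ring. Qed.
Lemma R_mulC : forall x y : R, Rmult x y = Rmult y x. Proof. move=> *; ring. Qed.
Lemma R_mul1 : forall x : R, Rmult R1 x = x. Proof. move=> *; ring. Qed.
Lemma R_mulDl : forall x y z : R, Rmult (Rplus x y) z = Rplus (Rmult x z) (Rmult y z).
Proof. move=> *; ring. Qed.
Lemma R_one_neq0 : R1 != R0.
Proof. by apply/eqP; exact: R1_neq_R0. Qed.

HB.instance Definition _ :=
  GRing.Zmodule_isComNzRing.Build R R_mulA R_mulC R_mul1 R_mulDl R_one_neq0.

Lemma R_mulVf (x : R) : x != R0 -> Rmult (Rinv x) x = R1.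
Proof. by move/eqP=> h; field. Qed.
Lemma R_inv0 : Rinv R0 = R0. Proof. exact: Rinv_0. Qed.

HB.instance Definition _ := GRing.ComNzRing_isField.Build R R_mulVf R_inv0.

Local Open Scope ring_scope.

Section Ellipsoid.
Variables (n m : nat) (A : 'M[R]_(n, m)) (u : 'cV[R]_m).

Definition Dm (d : 'cV[R]_m) : 'M[R]_m := diag_mx d^T.
Definition rr (l : 'cV[R]_m) : 'cV[R]_m := 2^-1 *: (u + l).
Definition vv (l : 'cV[R]_m) : 'cV[R]_m := 2^-1 *: (u - l).
Definition Bm (d : 'cV[R]_m) : 'M[R]_n := A *m Dm d *m A^T.
Definition yy (d l : 'cV[R]_m) : 'cV[R]_n := invmx (Bm d) *m A *m Dm d *m rr l.
Definition tt (d l : 'cV[R]_m) : 'cV[R]_m := A^T *m yy d l - rr l.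
Definition ff (d l : 'cV[R]_m) : R :=
  ((vv l)^T *m Dm d *m vv l) 0 0 - ((tt d l)^T *m Dm d *m tt d l) 0 0.
Definition gam (d l : 'cV[R]_m) (i : 'I_m) : R :=
  sqrt (ff d l * ((col i A)^T *m invmx (Bm d) *m col i A) 0 0).
Definition volE (d l : 'cV[R]_m) : R :=
  (Rpower (ff d l) (INR n / 2) / sqrt (\det (Bm d)))%R.

End Ellipsoid.

From HB Require Import structures.
From Stdlib Require Import Reals Lra.
From mathcomp Require Import all_boot all_order all_algebra.

(* Proof: the update rescales [A D A^T] by [f~ alpha / f] and adds the rank-one
   term [2/(m-1) a_j a_j^T / (a_j^T B^-1 a_j)], so by the matrix determinant
   lemma [det B~ = (f~ alpha / f)^n (1 + 2/(m-1)) det B]; all [f]-factors cancel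
   in the volume ratio, which equals [(alpha^n (1 + 2/(m-1)))^(-1/2)].
   Bernoulli's inequality, with [alpha >= 1 - 1/m^2] and [n <= m - 1], bounds
   [alpha^n (1 + 2/(m-1))] below by [(m+1)/m >= exp (1/(m+1))]. *)

Set Implicit Arguments.
Unset Strict Implicit.

Local Open Scope R_scope.

Lemma Bernoulli_le_pow (a : R) (k : nat) : 0 <= a -> 1 - INR k * (1 - a) <= a ^ k.
Proof.
move=> a_ge0; elim: k => [|k IHk]; first by rewrite /=; lra.
rewrite S_INR [a ^ _]/=.
have k_ge0 := pos_INR k.
have : a * (1 - INR k * (1 - a)) <= a * a ^ k by apply: Rmult_le_compat_l.
have : 0 <= INR k * ((1 - a) * (1 - a)) by apply: Rmult_le_pos => //; exact: Rle_0_sqr.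
nra.
Qed.

Lemma exp_inv_succ_le (M : R) : 0 < M -> exp (/ (M + 1)) <= (M + 1) / M.
Proof.
move=> M_gt0.
have h : / ((M + 1) / M) <= / exp (/ (M + 1)).
  rewrite -exp_Ropp; apply: Rle_trans (exp_ineq1_le _); right; field; lra.
rewrite -(Rinv_inv (exp _)) -(Rinv_inv ((M + 1) / M)).
apply: Rinv_le_contravar h; apply: Rinv_0_lt_compat; apply: Rdiv_lt_0_compat; lra.
Qed.

Lemma shrink_factor_ge (M alpha : R) (n : nat) :
  2 <= M -> INR n <= M - 1 -> (M ^ 2 - 1) / M ^ 2 <= alpha ->
  exp (/ (M + 1)) <= alpha ^ n * (1 + 2 / (M - 1)).
Proof.
move=> M_ge2 n_le alpha_ge.
set a := (M ^ 2 - 1) / M ^ 2 in alpha_ge.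
have aE : 1 - a = / M ^ 2 by rewrite /a; field; nra.
have inv_le : / M ^ 2 <= 1 by rewrite -Rinv_1; apply: Rinv_le_contravar; nra.
have a_ge0 : 0 <= a by lra.
have pow_ge : 1 - (M - 1) / M ^ 2 <= alpha ^ n.
  have a_pow := pow_incr _ _ n (conj a_ge0 alpha_ge).
  apply: (Rle_trans _ _ _ _ (Rle_trans _ _ _ (Bernoulli_le_pow n a_ge0) a_pow)).
  rewrite aE; apply: Rplus_le_compat_l; apply: Ropp_le_contravar.
  apply: Rmult_le_compat_r; [apply: Rlt_le; apply: Rinv_0_lt_compat; nra | lra].
apply: (Rle_trans _ _ _ (exp_inv_succ_le (_ : 0 < M))); first lra.
have K_gt0 : 0 < 1 + 2 / (M - 1).
  have : 0 < 2 / (M - 1) by apply: Rdiv_lt_0_compat; lra.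
  lra.
apply: (Rle_trans _ _ _ _ (Rmult_le_compat_r _ _ _ (Rlt_le _ _ K_gt0) pow_ge)).
have -> : (1 - (M - 1) / M ^ 2) * (1 + 2 / (M - 1)) = (M ^ 3 + 1) / (M ^ 2 * (M - 1))
  by field; lra.
apply: Rmult_le_reg_r (_ : 0 < M ^ 3 * (M - 1)) _; first nra.
have -> : (M + 1) / M * (M ^ 3 * (M - 1)) = (M + 1) * M ^ 2 * (M - 1) by field; lra.
have -> : (M ^ 3 + 1) / (M ^ 2 * (M - 1)) * (M ^ 3 * (M - 1)) = (M ^ 3 + 1) * M by field; lra.
nra.
Qed.

Lemma Rpower_half_INR (x : R) (k : nat) : 0 < x -> Rpower x (INR k / 2) = sqrt (x ^ k).
Proof.
move=> x_gt0; rewrite -(Rpower_pow k x x_gt0) -{2}(Rplus_half_diag (INR k)) Rpower_plus.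
by rewrite sqrt_square //; apply: Rlt_le; apply: exp_pos.
Qed.

Lemma volume_ratio_le (k : nat) (f ft dB s K c : R) :
  0 < f -> 0 < ft -> exp (/ c) <= s ^ k * K ->
  Rpower ft (INR k / 2) / sqrt ((ft * s / f) ^ k * K * dB)
  <= exp (- / (2 * c)) * (Rpower f (INR k / 2) / sqrt dB).
Proof.
move=> f_gt0 ft_gt0 sK_ge.
have sK_gt0 : 0 < s ^ k * K := Rlt_le_trans _ _ _ (exp_pos _) sK_ge.
rewrite !Rpower_half_INR //.
set x := sqrt (ft ^ k); set y := sqrt (f ^ k); set p := sqrt (s ^ k * K).
have x_gt0 : 0 < x by apply: sqrt_lt_R0; apply: pow_lt.
have y_gt0 : 0 < y by apply: sqrt_lt_R0; apply: pow_lt.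
have p_gt0 : 0 < p by apply: sqrt_lt_R0.
have exp_le_p : exp (/ (2 * c)) <= p.
  rewrite -(sqrt_square (exp _)); last exact: Rlt_le _ _ (exp_pos _).
  apply: sqrt_le_1_alt; rewrite -exp_plus.
  have [c0|c_neq0] := Req_dec c 0.
    by move: sK_ge; rewrite c0 Rmult_0_r !Rinv_0 Rplus_0_r.
  by rewrite (_ : _ + _ = / c) //; field.
have -> : (ft * s / f) ^ k * K * dB = (x * p / y) ^ 2 * dB.
  rewrite /Rdiv !Rpow_mult_distr !pow_inv !pow2_sqrt; try exact: Rlt_le.
  - field; apply: pow_nonzero; lra.
  - apply: Rlt_le; exact: pow_lt.
  - apply: Rlt_le; exact: pow_lt.
rewrite sqrt_mult_alt; last exact: pow2_ge_0.
rewrite sqrt_pow2; last by apply: Rlt_le; apply: Rdiv_lt_0_compat => //; apply: Rmult_lt_0_compat.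
(* [sqrt] and [Rinv] are total: for [dB <= 0] both sides are [0]. *)
have [dB_le0 | dB_gt0] := Rle_lt_dec (sqrt dB) 0.
  have -> : sqrt dB = 0 by have := sqrt_pos dB; lra.
  by rewrite Rmult_0_r /Rdiv !Rinv_0 !Rmult_0_r; right.
have -> : x / (x * p / y * sqrt dB) = / p * (y / sqrt dB) by field; lra.
apply: Rmult_le_compat_r; first by apply: Rlt_le; apply: Rdiv_lt_0_compat.
by rewrite exp_Ropp; apply: Rinv_le_contravar => //; exact: exp_pos.
Qed.

Lemma mul_sqr_gt0 (x y : R) : x <> 0 -> 0 < y -> 0 < x * y * x.
Proof. by move=> x_neq0 y_gt0; have := Rsqr_pos_lt _ x_neq0; rewrite /Rsqr; nra. Qed.

Lemma mul_sqr_ge0 (x y : R) : 0 <= y -> 0 <= x * y * x.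
Proof. by move=> y_ge0; have := Rle_0_sqr x; rewrite /Rsqr; nra. Qed.

Local Open Scope ring_scope.
Import GRing.Theory.

Lemma natr_INR (k : nat) : k%:R = INR k :> R.
Proof. by elim: k => [|k IHk] //; rewrite S_INR -IHk mulrS addrC. Qed.

Lemma exprR_pow (x : R) (k : nat) : x ^+ k = pow x k.
Proof. by elim: k => [|k IHk] //; rewrite exprS IHk. Qed.


Lemma det_1_add_rank1 (T : comPzRingType) (k : nat) (x y : 'cV[T]_k) :
  \det (1%:M + x *m y^T) = 1 + (y^T *m x) 0 0.
Proof.
pose P := block_mx (1%:M : 'M_k) x (- y^T) (1%:M : 'M_1).
have lower_upper : block_mx 1%:M 0 (- y^T) 1%:M *m block_mx 1%:M x 0 (1%:M + y^T *m x) = P.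
  by rewrite mulmx_block !mul1mx !mul0mx !mulmx1 ?mulmx0 !addr0 mulNmx addrCA addNr addr0.
have upper_lower : block_mx (1%:M + x *m y^T) x 0 1%:M *m block_mx 1%:M 0 (- y^T) 1%:M = P.
  by rewrite mulmx_block !mul1mx !mul0mx ?mulmx0 !mulmx1 ?addr0 ?add0r mulmxN addrK.
have := congr1 determinant lower_upper; rewrite -upper_lower !det_mulmx.
rewrite det_ublock (det_lblock (1%:M : 'M_k)) det_ublock !det1 !mul1r !mulr1 => <-.
by rewrite det_mx11 !mxE.
Qed.

Lemma det_add_rank1 (T : comUnitRingType) (k : nat) (M : 'M[T]_k) (x y : 'cV[T]_k) :
  M \in unitmx -> \det (M + x *m y^T) = \det M * (1 + (y^T *m invmx M *m x) 0 0).
Proof.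
move=> M_unit; have -> : M + x *m y^T = M *m (1%:M + (invmx M *m x) *m y^T).
  by rewrite mulmxDr mulmx1 !mulmxA mulmxV // mul1mx.
by rewrite det_mulmx det_1_add_rank1 mulmxA.
Qed.

Lemma sumR_ge0 (I : finType) (P : pred I) (F : I -> R) :
  (forall i, Rle 0 (F i)) -> Rle 0 (\sum_(i | P i) F i).
Proof.
move=> F_ge0; apply: (big_ind (fun x => Rle 0 x)) => //; first exact: Rle_refl.
by move=> x y; apply: Rplus_le_le_0_compat.
Qed.

Lemma sumR_gt0 (I : finType) (F : I -> R) (k : I) :
  (forall i, Rle 0 (F i)) -> Rlt 0 (F k) -> Rlt 0 (\sum_i F i).
Proof.
move=> F_ge0 Fk_gt0; rewrite (bigD1 k) //=.
by apply: Rplus_lt_le_0_compat => //; apply: sumR_ge0.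
Qed.

Lemma qf_diag_gt0 (k : nat) (w : 'rV[R]_k) (d : 'cV[R]_k) :
  (forall i, Rlt 0 (d i 0)) -> w != 0 -> Rlt 0 ((w *m diag_mx d^T *m w^T) 0 0).
Proof.
move=> d_gt0 w_neq0.
have [i /eqP wi_neq0] : exists i, w 0 i != 0.
  apply/existsP; apply: contraNT w_neq0 => /existsPn w0.
  by apply/eqP/rowP => i; rewrite mxE; apply/eqP/negbNE/w0.
rewrite mul_mx_diag mxE; apply: (sumR_gt0 (k := i)) => [l|]; rewrite !mxE.
  exact: mul_sqr_ge0 (Rlt_le _ _ (d_gt0 l)).
exact: mul_sqr_gt0.
Qed.

Lemma DmD (m : nat) (x y : 'cV[R]_m) : Dm (x + y) = Dm x + Dm y.
Proof. by rewrite /Dm !linearD. Qed.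

Lemma DmZ (m : nat) (c : R) (x : 'cV[R]_m) : Dm (c *: x) = c *: Dm x.
Proof. by rewrite /Dm !linearZ. Qed.

Lemma Dm_delta (m : nat) (j : 'I_m) : Dm (delta_mx j 0) = delta_mx j j.
Proof.
rewrite /Dm trmx_delta; apply/matrixP => a b; rewrite !mxE eqxx /=.
by case: (a =P b) => [<-|ab]; case: (a =P j) => [aj|//]; case: (b =P j) => // /esym;
  rewrite -aj.
Qed.

Section Ellipsoid.
Variables (n m : nat) (A : 'M[R]_(n, m)).

Lemma BmD (x y : 'cV[R]_m) : Bm A (x + y) = Bm A x + Bm A y.
Proof. by rewrite /Bm DmD mulmxDr mulmxDl. Qed.

Lemma BmZ (c : R) (x : 'cV[R]_m) : Bm A (c *: x) = c *: Bm A x.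
Proof. by rewrite /Bm DmZ -scalemxAr -scalemxAl. Qed.

Lemma Bm_delta (j : 'I_m) : Bm A (delta_mx j 0) = col j A *m (col j A)^T.
Proof.
by rewrite /Bm Dm_delta colE trmx_mul trmx_delta mulmxA -(mulmxA A (delta_mx j 0)) mul_delta_mx.
Qed.

Lemma col_neq0 (j : 'I_m) : \sum_(i < n) A i j ^+ 2 = 1 -> col j A != 0.
Proof.
move=> norm1; apply/eqP => Aj0; move: norm1; rewrite big1 => [/esym|i _].
  exact: R1_neq_R0.
by move/matrixP/(_ i 0): Aj0; rewrite !mxE => ->; rewrite expr2 mulr0.
Qed.

Variable d : 'cV[R]_m.
Hypothesis A_spans : forall x : 'cV[R]_n, exists lam : 'cV[R]_m,
  (forall i : 'I_m, Rle 0 (lam i 0)) /\ A *m lam = x.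
Hypothesis d_gt0 : forall i : 'I_m, Rlt 0 (d i 0).

Lemma Bm_tr : (Bm A d)^T = Bm A d.
Proof. by rewrite /Bm !trmx_mul trmxK /Dm tr_diag_mx mulmxA. Qed.

Lemma qf_Bm_gt0 (v : 'rV[R]_n) : v != 0 -> Rlt 0 ((v *m Bm A d *m v^T) 0 0).
Proof.
move=> v_neq0.
have -> : v *m Bm A d *m v^T = (v *m A) *m Dm d *m (v *m A)^T.
  by rewrite /Bm trmx_mul !mulmxA.
apply: qf_diag_gt0 => //; apply/eqP => vA0.
have vvT_gt0 : Rlt 0 ((v *m v^T) 0 0).
  have := qf_diag_gt0 (d := const_mx 1) _ v_neq0.
  by rewrite trmx_const diag_const_mx mulmx1; apply=> i; rewrite mxE; apply: Rlt_0_1.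
have [lam [_ Alam]] := A_spans v^T.
by move: vvT_gt0; rewrite -Alam mulmxA vA0 mul0mx mxE => /Rlt_irrefl.
Qed.

Lemma Bm_unit : Bm A d \in unitmx.
Proof.
rewrite -row_free_unit; apply/inj_row_free => v vB0; apply/eqP/contraT => v_neq0.
by have := qf_Bm_gt0 v_neq0; rewrite vB0 mul0mx mxE => /Rlt_irrefl.
Qed.

Lemma qf_invBm_gt0 (a : 'cV[R]_n) : a != 0 -> Rlt 0 ((a^T *m invmx (Bm A d) *m a) 0 0).
Proof.
move=> a_neq0; set z := a^T *m invmx (Bm A d).
have zB : z *m Bm A d = a^T by rewrite mulmxKV // Bm_unit.
have -> : z *m a = z *m Bm A d *m z^T by rewrite -mulmxA -{1}[a]trmxK -zB trmx_mul Bm_tr.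
apply: qf_Bm_gt0; apply: contraNneq a_neq0 => z0.
by rewrite -[a]trmxK -zB z0 mul0mx trmx0.
Qed.

Lemma det_Bm_rank1_update (s t : R) (j : 'I_m) :
  \det (Bm A (s *: (d + t *: delta_mx j 0))) =
  s ^+ n * (1 + t * ((col j A)^T *m invmx (Bm A d) *m col j A) 0 0) * \det (Bm A d).
Proof.
rewrite BmZ BmD BmZ Bm_delta detZ scalemxAl det_add_rank1 ?Bm_unit //.
by rewrite -scalemxAr mxE [\det _ * _]mulrC mulrA.
Qed.

End Ellipsoid.

Theorem lemma10 (n m : nat) (A : 'M[R]_(n, m)) (u : 'cV[R]_m)
  (Hn : (0 < n)%N) (Hnm : (n < m)%N)
  (Hcol : forall j : 'I_m, \sum_(i < n) A i j ^+ 2 = 1)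
  (Hspan : forall x : 'cV[R]_n, exists lam : 'cV[R]_m,
             (forall i : 'I_m, Rle 0 (lam i 0)) /\ A *m lam = x)
  (d dt l lt : 'cV[R]_m)
  (Hd : forall i : 'I_m, Rlt 0 (d i 0))
  (Hdt : forall i : 'I_m, Rlt 0 (dt i 0))
  (Hf : Rlt 0 (ff A u d l)) (Hft : Rlt 0 (ff A u dt lt))
  (j : 'I_m) (alpha : R)
  (Halpha : Rle ((m%:R ^+ 2 - 1) / m%:R ^+ 2) alpha)
  (Hrel : (ff A u dt lt)^-1 *: dt =
          alpha *: ((ff A u d l)^-1 *: d
                    + (2 / (m%:R - 1) / (gam A u d l j) ^+ 2) *: delta_mx j 0)) :
  Rle (volE A u dt lt) (exp (- (2 * (m%:R + 1))^-1) * volE A u d l).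
Proof.
set f := ff A u d l in Hf Hrel *; set ft := ff A u dt lt in Hft Hrel *.
have q_gt0 := qf_invBm_gt0 Hspan Hd (col_neq0 (Hcol j)).
set q := ((col j A)^T *m invmx (Bm A d) *m col j A) 0 0 in q_gt0.
have gam2 : gam A u d l j ^+ 2 = f * q.
  by rewrite /gam expr2; apply: sqrt_sqrt; apply: Rlt_le; apply: Rmult_lt_0_compat.
have m_ge2 : Rle 2 (INR m) by apply: (le_INR 2); apply/leP; exact: leq_ltn_trans Hn Hnm.
rewrite (natr_INR m) in Halpha Hrel *.
have f_neq0 : f != 0 by apply/eqP; apply: Rgt_not_eq.
have ft_neq0 : ft != 0 by apply/eqP; apply: Rgt_not_eq.
have q_neq0 : q != 0 by apply/eqP; apply: Rgt_not_eq.
set c := 2 / (INR m - 1) / gam A u d l j ^+ 2 in Hrel.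
have fcq : f * c * q = 2 / (INR m - 1).
  by rewrite mulrAC mulrC /c gam2 divfK // mulf_neq0.
have dtE : dt = (ft * alpha / f) *: (d + (f * c) *: delta_mx j 0).
  rewrite -(scalerKV ft_neq0 dt) Hrel !scalerA !scalerDr !scalerA.
  by congr (_ + _ *: _); rewrite mulrA divfK.
rewrite /volE -/f -/ft dtE (det_Bm_rank1_update Hspan Hd) -/q fcq exprR_pow.
apply: volume_ratio_le => //; apply: shrink_factor_ge => //.
  by have := le_INR _ _ (leP Hnm); rewrite S_INR; lra.
by move: Halpha; rewrite !exprR_pow.
Qed.
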